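(* Let $(\mathcal{C},\mathbb{E},\mathfrak{s})$ be an extriangulated category and let $\varphi_\bullet=(\varphi_1,\varphi_2,\varphi_3)$ be a morphism of $\mathfrak{s}$-triangles from $X_\bullet=(X_1\xrightarrow{f_1}X_2\xrightarrow{f_2}X_3\overset{\delta}{\dashrightarrow})$ to $Y_\bullet=(Y_1\xrightarrow{g_1}Y_2\xrightarrow{g_2}Y_3\overset{\delta'}{\dashrightarrow})$. Then: (1) The following are equivalent: (a) $\underline{\varphi_\bullet}=0$ in $\mathfrak{s}\textup{-tri}(\mathcal{C})/\mathcal{R}_2$; (b) $\varphi_1$ factors through $f_1$; (c) $\varphi_3$ factors through $g_2$. (2) $\underline{\varphi_\bullet}$ is a monomorphism in $\mathfrak{s}\textup{-tri}(\mathcal{C})/\mathcal{R}_2$ if and only if $\begin{pmatrix} f_1\\ \varphi_1\end{pmatrix}:X_1\to X_2\oplus Y_1$ is a section (split monomorphism).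
   Context: An extriangulated category $(\mathcal{C},\mathbb{E},\mathfrak{s})$ (Nakaoka–Palu) is an additive category with an additive bifunctor $\mathbb{E}:\mathcal{C}^{\mathrm{op}}\times\mathcal{C}\to Ab$ and a realization $\mathfrak{s}$ assigning to each $\delta\in\mathbb{E}(C,A)$ an equivalence class of sequences $A\to B\to C$, giving $\mathfrak{s}$-triangles $A\to B\to C\overset{\delta}{\dashrightarrow}$, satisfying axioms (ET1)–(ET4)$^{\mathrm{op}}$. $\mathfrak{s}\textup{-tri}(\mathcal{C})$ is the category whose objects are $\mathfrak{s}$-triangles and whose morphisms $X_\bullet\to Y_\bullet$ (notation as in the claim) are triples $(\varphi_1,\varphi_2,\varphi_3)$ with $\varphi_2f_1=g_1\varphi_1$, $\varphi_3f_2=g_2\varphi_2$ and $\varphi_{1*}\delta=\varphi_3^*\delta'$, where $a_*\delta=\mathbb{E}(X_3,a)(\delta)$ and $c^*\delta'=\mathbb{E}(c,Y_1)(\delta')$ (morphisms of $\mathfrak{s}$-triangles). $\mathcal{R}_2(X_\bullet,Y_\bullet)$ is the set of morphisms $\varphi_\bullet$ such that $\varphi_3$ factors through $g_2$; it is an ideal of $\mathfrak{s}\textup{-tri}(\mathcal{C})$, and $\underline{\varphi_\bullet}$ denotes the image in the quotient $\mathfrak{s}\textup{-tri}(\mathcal{C})/\mathcal{R}_2$. *)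

From HB Require Import structures.
From mathcomp Require Import all_boot all_algebra.
Set Implicit Arguments. Unset Strict Implicit. Unset Printing Implicit Defensive.
Import GRing.Theory.
Local Open Scope ring_scope.

Record CatData := {
  Obj :> Type;
  Mor : Obj -> Obj -> zmodType;
  idm : forall A, Mor A A;
  comp : forall A B C, Mor B C -> Mor A B -> Mor A C }.
Arguments Mor {c} A B.
Arguments idm {c} A.
Arguments comp {c A B C}.
Notation "g ∘ f" := (comp g f) (at level 40, left associativity).

Record PreAdd := {
  pcd :> CatData;
  compA : forall (A B C D : pcd) (h : Mor C D) (g : Mor B C) (f : Mor A B),
      h ∘ (g ∘ f) = (h ∘ g) ∘ f;
  comp1m : forall (A B : pcd) (f : Mor A B), idm B ∘ f = f;
  compm1 : forall (A B : pcd) (f : Mor A B), f ∘ idm A = f;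
  compDl : forall (A B C : pcd) (g g' : Mor B C) (f : Mor A B),
      (g + g') ∘ f = g ∘ f + g' ∘ f;
  compDr : forall (A B C : pcd) (g : Mor B C) (f f' : Mor A B),
      g ∘ (f + f') = g ∘ f + g ∘ f' }.

Record AddData := {
  apa :> PreAdd;
  zobj : apa;
  bip : apa -> apa -> apa;
  inl : forall A B : apa, Mor A (bip A B);
  inr : forall A B : apa, Mor B (bip A B);
  pl : forall A B : apa, Mor (bip A B) A;
  pr : forall A B : apa, Mor (bip A B) B }.
Arguments zobj {a}.
Arguments bip {a}.
Arguments inl {a} A B.
Arguments inr {a} A B.
Arguments pl {a} A B.
Arguments pr {a} A B.

Record AddCat := {
  ad :> AddData;
  zobj_ax : idm (@zobj ad) = 0;
  bip_ll : forall A B : ad, pl A B ∘ inl A B = idm A;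
  bip_rr : forall A B : ad, pr A B ∘ inr A B = idm B;
  bip_lr : forall A B : ad, pl A B ∘ inr A B = 0;
  bip_rl : forall A B : ad, pr A B ∘ inl A B = 0;
  bip_id : forall A B : ad, inl A B ∘ pl A B + inr A B ∘ pr A B = idm (bip A B) }.

Definition is_iso (C : CatData) (A B : C) (f : Mor A B) : Prop :=
  exists g : Mor B A, g ∘ f = idm A /\ f ∘ g = idm B.

(* E C A = E(C,A); Epush a δ = a_* δ; Epull c δ = c^* δ;
   realize δ x y  <->  the sequence A -x-> B -y-> C belongs to the
   equivalence class s(δ). *)
Record ExtriData := {
  eac :> AddCat;
  Ext : eac -> eac -> zmodType;
  Epush : forall (A A' C : eac), Mor A A' -> Ext C A -> Ext C A';
  Epull : forall (A C C' : eac), Mor C' C -> Ext C A -> Ext C' A;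
  realize : forall (A B C : eac), Ext C A -> Mor A B -> Mor B C -> Prop }.
Arguments Ext {e} C A.
Arguments Epush {e A A' C}.
Arguments Epull {e A C C'}.
Arguments realize {e A B C}.

Record ExtriCat := {
  ed :> ExtriData;
  EpushD : forall (A A' C : ed) (a : Mor A A') (d d' : Ext C A),
      Epush a (d + d') = Epush a d + Epush a d';
  EpullD : forall (A C C' : ed) (c : Mor C' C) (d d' : Ext C A),
      Epull c (d + d') = Epull c d + Epull c d';
  EpushDm : forall (A A' C : ed) (a a' : Mor A A') (d : Ext C A),
      Epush (a + a') d = Epush a d + Epush a' d;
  EpullDm : forall (A C C' : ed) (c c' : Mor C' C) (d : Ext C A),
      Epull (c + c') d = Epull c d + Epull c' d;
  Epush1 : forall (A C : ed) (d : Ext C A), Epush (idm A) d = d;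
  Epull1 : forall (A C : ed) (d : Ext C A), Epull (idm C) d = d;
  EpushM : forall (A A' A'' C : ed) (a : Mor A A') (a' : Mor A' A'') (d : Ext C A),
      Epush (a' ∘ a) d = Epush a' (Epush a d);
  EpullM : forall (A C C' C'' : ed) (c : Mor C' C) (c' : Mor C'' C') (d : Ext C A),
      Epull (c ∘ c') d = Epull c' (Epull c d);
  Epush_pull : forall (A A' C C' : ed) (a : Mor A A') (c : Mor C' C) (d : Ext C A),
      Epush a (Epull c d) = Epull c (Epush a d);
  real_ex : forall (A C : ed) (d : Ext C A),
      exists (B : ed) (x : Mor A B) (y : Mor B C), realize d x y;
  real_uniq : forall (A B B' C : ed) (d : Ext C A) (x : Mor A B) (y : Mor B C)
      (x' : Mor A B') (y' : Mor B' C),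
      realize d x y -> realize d x' y' ->
      exists b : Mor B B', is_iso b /\ b ∘ x = x' /\ y' ∘ b = y;
  real_closed : forall (A B B' C : ed) (d : Ext C A) (x : Mor A B) (y : Mor B C)
      (x' : Mor A B') (y' : Mor B' C) (b : Mor B B'),
      realize d x y -> is_iso b -> b ∘ x = x' -> y' ∘ b = y -> realize d x' y';
  real_mor : forall (A B C A' B' C' : ed) (d : Ext C A) (d' : Ext C' A')
      (x : Mor A B) (y : Mor B C) (x' : Mor A' B') (y' : Mor B' C')
      (a : Mor A A') (c : Mor C C'),
      realize d x y -> realize d' x' y' -> Epush a d = Epull c d' ->
      exists b : Mor B B', b ∘ x = x' ∘ a /\ c ∘ y = y' ∘ b;
  et2_zero : forall (A C : ed), realize (0 : Ext C A) (inl A C) (pr A C);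
  et2_sum : forall (A B C A' B' C' : ed) (d : Ext C A) (d' : Ext C' A')
      (th : Ext (bip C C') (bip A A'))
      (x : Mor A B) (y : Mor B C) (x' : Mor A' B') (y' : Mor B' C'),
      Epush (pl A A') (Epull (inl C C') th) = d ->
      Epush (pr A A') (Epull (inr C C') th) = d' ->
      Epush (pl A A') (Epull (inr C C') th) = 0 ->
      Epush (pr A A') (Epull (inl C C') th) = 0 ->
      realize d x y -> realize d' x' y' ->
      realize th (inl B B' ∘ x ∘ pl A A' + inr B B' ∘ x' ∘ pr A A')
                 (inl C C' ∘ y ∘ pl B B' + inr C C' ∘ y' ∘ pr B B');
  et3 : forall (A B C A' B' C' : ed) (d : Ext C A) (d' : Ext C' A')
      (x : Mor A B) (y : Mor B C) (x' : Mor A' B') (y' : Mor B' C')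
      (a : Mor A A') (b : Mor B B'),
      realize d x y -> realize d' x' y' -> b ∘ x = x' ∘ a ->
      exists c : Mor C C', c ∘ y = y' ∘ b /\ Epush a d = Epull c d';
  et3op : forall (A B C A' B' C' : ed) (d : Ext C A) (d' : Ext C' A')
      (x : Mor A B) (y : Mor B C) (x' : Mor A' B') (y' : Mor B' C')
      (b : Mor B B') (c : Mor C C'),
      realize d x y -> realize d' x' y' -> c ∘ y = y' ∘ b ->
      exists a : Mor A A', b ∘ x = x' ∘ a /\ Epush a d = Epull c d';
  et4 : forall (A B C D F : ed) (f : Mor A B) (f' : Mor B D) (g : Mor B C)
      (g' : Mor C F) (d : Ext D A) (d' : Ext F B),
      realize d f f' -> realize d' g g' ->
      exists (Eo : ed) (h : Mor A C) (h' : Mor C Eo) (dd : Mor D Eo) (e : Mor Eo F)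
        (d'' : Ext Eo A),
        realize d'' h h' /\ realize (Epush f' d') dd e /\
        Epull dd d'' = d /\ Epush f d'' = Epull e d' /\
        h = g ∘ f /\ dd ∘ f' = h' ∘ g /\ e ∘ h' = g';
  et4op : forall (A B C D F : ed) (f' : Mor D A) (f : Mor A B) (g' : Mor F B)
      (g : Mor B C) (d : Ext B D) (d' : Ext C F),
      realize d f' f -> realize d' g' g ->
      exists (Eo : ed) (dd : Mor D Eo) (e : Mor Eo F) (h' : Mor Eo A) (h : Mor A C)
        (d'' : Ext C Eo),
        realize d'' h' h /\ realize (Epull g' d) dd e /\
        Epush e d'' = d' /\ Epush dd d = Epull g d'' /\
        h = g ∘ f /\ h' ∘ dd = f' /\ f ∘ h' = g' ∘ e }.

Record Tri (C : ExtriCat) := {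
  T1 : C; T2 : C; T3 : C;
  tf1 : Mor T1 T2; tf2 : Mor T2 T3; tdel : Ext T3 T1;
  treal : realize tdel tf1 tf2 }.

Definition is_trimor (C : ExtriCat) (X Y : Tri C)
  (a1 : Mor (T1 X) (T1 Y)) (a2 : Mor (T2 X) (T2 Y)) (a3 : Mor (T3 X) (T3 Y)) : Prop :=
  a2 ∘ tf1 X = tf1 Y ∘ a1 /\ a3 ∘ tf2 X = tf2 Y ∘ a2 /\
  Epush a1 (tdel X) = Epull a3 (tdel Y).

Definition inR2 (C : ExtriCat) (X Y : Tri C)
  (a1 : Mor (T1 X) (T1 Y)) (a2 : Mor (T2 X) (T2 Y)) (a3 : Mor (T3 X) (T3 Y)) : Prop :=
  is_trimor a1 a2 a3 /\ exists h : Mor (T3 X) (T2 Y), a3 = tf2 Y ∘ h.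

(* underline(phi) = 0 in s-tri(C)/R_2, i.e. phi - 0 lies in R_2 *)
Definition quot_zero (C : ExtriCat) (X Y : Tri C)
  (a1 : Mor (T1 X) (T1 Y)) (a2 : Mor (T2 X) (T2 Y)) (a3 : Mor (T3 X) (T3 Y)) : Prop :=
  inR2 (a1 - 0) (a2 - 0) (a3 - 0).

(* underline(phi) is a monomorphism in s-tri(C)/R_2: for all morphisms
   psi, psi' : Z -> X, underline(phi psi) = underline(phi psi') implies
   underline(psi) = underline(psi'); equality in the quotient by the
   ideal R_2 means the difference lies in R_2. *)
Definition quot_mono (C : ExtriCat) (X Y : Tri C)
  (a1 : Mor (T1 X) (T1 Y)) (a2 : Mor (T2 X) (T2 Y)) (a3 : Mor (T3 X) (T3 Y)) : Prop :=
  forall (Z : Tri C)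
    (b1 : Mor (T1 Z) (T1 X)) (b2 : Mor (T2 Z) (T2 X)) (b3 : Mor (T3 Z) (T3 X))
    (c1 : Mor (T1 Z) (T1 X)) (c2 : Mor (T2 Z) (T2 X)) (c3 : Mor (T3 Z) (T3 X)),
    is_trimor b1 b2 b3 -> is_trimor c1 c2 c3 ->
    inR2 (a1 ∘ b1 - a1 ∘ c1) (a2 ∘ b2 - a2 ∘ c2) (a3 ∘ b3 - a3 ∘ c3) ->
    inR2 (b1 - c1) (b2 - c2) (b3 - c3).

Definition factors_through_right (C : CatData) (A B D : C)
  (f : Mor A D) (u : Mor A B) : Prop := exists v : Mor B D, f = v ∘ u.
Definition factors_through_left (C : CatData) (A B D : C)
  (f : Mor A D) (w : Mor B D) : Prop := exists v : Mor A B, f = w ∘ v.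

Definition is_section (C : CatData) (A B : C) (s : Mor A B) : Prop :=
  exists r : Mor B A, r ∘ s = idm A.

Definition colmap (C : AddCat) (A B B' : C) (f : Mor A B) (g : Mor A B') :
  Mor A (bip B B') := inl B B' ∘ f + inr B B' ∘ g.

(* Everything rests on the exactness of E along an s-triangle
   A -x-> B -y-> D with class δ: a morphism a out of A satisfies a_* δ = 0
   iff a factors through x, and a morphism c into D satisfies c^* δ = 0 iff
   c factors through y.  For a morphism of s-triangles φ1_* δ = φ3^* δ', so
   φ1 factors through f1 iff φ3 factors through g2; this is (1), and it
   reduces membership in R_2 to a condition on first components.
   If (f1; φ1) has a retraction, that condition cancels against it, so the
   class of φ is monic.  Conversely, realize φ1_* δ as Y1 --> M -e-> X3 and
   pull δ back along e: this yields a morphism (1, b, e) into X whose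
   composite with φ lies in R_2.  Monicity forces e to factor through f2,
   and (ET3)^op then gives a : Y1 -> X1 with (a φ1)_* δ = δ, so 1 - a φ1
   factors as v f1 and (v, a) is a retraction of (f1; φ1). *)
From Pilot Require Import Defs.
From mathcomp Require Import all_boot all_algebra.
Set Implicit Arguments. Unset Strict Implicit. Unset Printing Implicit Defensive.
Import GRing.Theory.
Local Open Scope ring_scope.

Lemma additive_funB (U V : zmodType) (F : U -> V) :
  {morph F : x y / x + y} -> forall x y, F (x - y) = F x - F y.
Proof. by move=> FD x y; apply: (canRL (addrK (F y))); rewrite -FD subrK. Qed.

Lemma additive_fun0 (U V : zmodType) (F : U -> V) :
  {morph F : x y / x + y} -> F 0 = 0.
Proof. by move=> FD; rewrite -(subrr 0) (additive_funB FD) subrr. Qed.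

Section PreAdditive.
Variable C : PreAdd.
Implicit Types A B D : C.

Lemma comp0l A B D (f : Mor A B) : (0 : Mor B D) ∘ f = 0.
Proof. by apply: (additive_fun0 (F := fun g : Mor B D => g ∘ f)) => g g'; apply: compDl. Qed.

Lemma comp0r A B D (g : Mor B D) : g ∘ (0 : Mor A B) = 0.
Proof. by apply: (additive_fun0 (F := fun f : Mor A B => g ∘ f)) => f f'; apply: compDr. Qed.

Lemma compBl A B D (g g' : Mor B D) (f : Mor A B) : (g - g') ∘ f = g ∘ f - g' ∘ f.
Proof. by apply: (additive_funB (F := fun g : Mor B D => g ∘ f)) => x y; apply: compDl. Qed.

Lemma compBr A B D (g : Mor B D) (f f' : Mor A B) : g ∘ (f - f') = g ∘ f - g ∘ f'.
Proof. by apply: (additive_funB (F := fun f : Mor A B => g ∘ f)) => x y; apply: compDr. Qed.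

End PreAdditive.

Section Biproducts.
Variable C : AddCat.
Implicit Types A B D : C.

Definition rowmap A B B' (u : Mor B A) (w : Mor B' A) : Mor (bip B B') A :=
  u ∘ pl B B' + w ∘ pr B B'.

Lemma rowmap_colmap A B B' D (u : Mor B D) (w : Mor B' D) (f : Mor A B) (g : Mor A B') :
  rowmap u w ∘ colmap f g = u ∘ f + w ∘ g.
Proof.
rewrite /rowmap /colmap compDl !compDr !Defs.compA -!(Defs.compA u) -!(Defs.compA w).
by rewrite bip_ll bip_rr bip_lr bip_rl !comp0l !comp0r !comp1m addr0 add0r.
Qed.

Lemma colmap_comp A B B' D (f : Mor A B) (g : Mor A B') (h : Mor D A) :
  colmap f g ∘ h = colmap (f ∘ h) (g ∘ h).
Proof. by rewrite /colmap compDl -!Defs.compA. Qed.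

Lemma section_colmap_factors A B A' Z Z' (f : Mor A B) (phi : Mor A A')
    (g : Mor Z Z') (w : Mor Z A) :
  is_section (colmap f phi) ->
  factors_through_right (f ∘ w) g -> factors_through_right (phi ∘ w) g ->
  factors_through_right w g.
Proof.
move=> [r rK] [v1 e1] [v2 e2]; exists (r ∘ colmap v1 v2).
by rewrite -Defs.compA colmap_comp -e1 -e2 -colmap_comp Defs.compA rK comp1m.
Qed.

End Biproducts.

Section Extriangulated.
Variable C : ExtriCat.
Implicit Types A B D : C.

Lemma Epush0 A A' D (a : Mor A A') : Epush a (0 : Ext D A) = 0.
Proof. by apply: (additive_fun0 (F := Epush a)) => x y; apply: EpushD. Qed.

Lemma Epull0 A D D' (c : Mor D' D) : Epull c (0 : Ext D A) = 0.
Proof. by apply: (additive_fun0 (F := Epull c)) => x y; apply: EpullD. Qed.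

Lemma Epush0m A A' D (d : Ext D A) : Epush (0 : Mor A A') d = 0.
Proof.
by apply: (additive_fun0 (F := fun a : Mor A A' => Epush a d)) => x y; apply: EpushDm.
Qed.

Lemma Epull0m A D D' (d : Ext D A) : Epull (0 : Mor D' D) d = 0.
Proof.
by apply: (additive_fun0 (F := fun c : Mor D' D => Epull c d)) => x y; apply: EpullDm.
Qed.

Lemma EpushBm A A' D (a a' : Mor A A') (d : Ext D A) :
  Epush (a - a') d = Epush a d - Epush a' d.
Proof.
by apply: (additive_funB (F := fun a : Mor A A' => Epush a d)) => x y; apply: EpushDm.
Qed.

Lemma EpullBm A D D' (c c' : Mor D' D) (d : Ext D A) :
  Epull (c - c') d = Epull c d - Epull c' d.
Proof.
by apply: (additive_funB (F := fun c : Mor D' D => Epull c d)) => x y; apply: EpullDm.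
Qed.

Section Realization.
Variables (A B D : C) (d : Ext D A) (x : Mor A B) (y : Mor B D).
Hypothesis dxy : realize d x y.

(* Both vanishings come from comparing with a split triangle of the zero
   extension, via (ET3)^op and (ET3) respectively. *)
Lemma Epush_inflation : Epush x d = 0.
Proof.
have y0 : (0 : Mor D zobj) ∘ y = pr B zobj ∘ inl B zobj by rewrite comp0l bip_rl.
have [a [ax ad]] := et3op dxy (et2_zero B zobj) y0.
suff -> : x = a by rewrite ad Epull0.
have := congr1 (fun m => pl B zobj ∘ m) ax.
by rewrite /= !Defs.compA bip_ll !comp1m.
Qed.

Lemma Epull_deflation : Epull y d = 0.
Proof.
have x0 : pr zobj B ∘ inl zobj B = x ∘ (0 : Mor zobj A) by rewrite comp0r bip_rl.
have [c [cy dc]] := et3 (et2_zero zobj B) dxy x0.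
suff -> : y = c by rewrite -dc Epush0.
have := congr1 (fun m => m ∘ inr zobj B) cy.
by rewrite /= -!Defs.compA bip_rr !compm1.
Qed.

Lemma Epush_eq0_factors A' (a : Mor A A') :
  Epush a d = 0 -> factors_through_right a x.
Proof.
move=> ad0.
have ad : Epush a d = Epull (idm D) (0 : Ext D A') by rewrite ad0 Epull0.
have [b [bx _]] := real_mor dxy (et2_zero A' D) ad.
exists (pl A' D ∘ b).
by rewrite -Defs.compA bx Defs.compA bip_ll comp1m.
Qed.

Lemma Epull_eq0_factors D' (c : Mor D' D) :
  Epull c d = 0 -> factors_through_left c y.
Proof.
move=> cd0.
have cd : Epush (idm A) (0 : Ext D' A) = Epull c d by rewrite cd0 Epush0.
have [b [_ yb]] := real_mor (et2_zero A D') dxy cd.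
exists (b ∘ inr A D').
by rewrite Defs.compA -yb -Defs.compA bip_rr compm1.
Qed.

Lemma colmap_section_of_Epush A' (phi : Mor A A') (a : Mor A' A) :
  Epush a (Epush phi d) = d -> is_section (colmap x phi).
Proof.
move=> aphi_d.
have : Epush (idm A - a ∘ phi) d = 0 by rewrite EpushBm Epush1 EpushM aphi_d subrr.
move=> /Epush_eq0_factors [v ev]; exists (rowmap v a).
by rewrite rowmap_colmap -ev subrK.
Qed.

End Realization.

Section TriangleMorphisms.
Implicit Types X Y Z : Tri C.

Lemma trimor0 X Y :
  is_trimor (0 : Mor (T1 X) (T1 Y)) (0 : Mor (T2 X) (T2 Y)) (0 : Mor (T3 X) (T3 Y)).
Proof. by split; [|split]; rewrite ?comp0l ?comp0r ?Epush0m ?Epull0m. Qed.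

Lemma trimorB X Y (a1 b1 : Mor (T1 X) (T1 Y)) (a2 b2 : Mor (T2 X) (T2 Y))
    (a3 b3 : Mor (T3 X) (T3 Y)) :
  is_trimor a1 a2 a3 -> is_trimor b1 b2 b3 -> is_trimor (a1 - b1) (a2 - b2) (a3 - b3).
Proof.
move=> [a21 [a32 ad]] [b21 [b32 bd]]; split; [|split].
- by rewrite compBl compBr a21 b21.
- by rewrite compBl compBr a32 b32.
- by rewrite EpushBm EpullBm ad bd.
Qed.

Lemma trimorM Z X Y (a1 : Mor (T1 X) (T1 Y)) (a2 : Mor (T2 X) (T2 Y))
    (a3 : Mor (T3 X) (T3 Y)) (b1 : Mor (T1 Z) (T1 X)) (b2 : Mor (T2 Z) (T2 X))
    (b3 : Mor (T3 Z) (T3 X)) :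
  is_trimor a1 a2 a3 -> is_trimor b1 b2 b3 -> is_trimor (a1 ∘ b1) (a2 ∘ b2) (a3 ∘ b3).
Proof.
move=> [a21 [a32 ad]] [b21 [b32 bd]]; split; [|split].
- by rewrite -Defs.compA b21 !Defs.compA a21.
- by rewrite -Defs.compA b32 !Defs.compA a32.
- by rewrite EpushM bd Epush_pull ad EpullM.
Qed.

Lemma trimor_Epull X B D (c : Mor D (T3 X)) (z1 : Mor (T1 X) B) (z2 : Mor B D)
    (cXz : realize (Epull c (tdel X)) z1 z2) :
  exists b2, is_trimor (X := Build_Tri cXz) (Y := X) (idm (T1 X)) b2 c.
Proof.
have cX : Epush (idm (T1 X)) (Epull c (tdel X)) = Epull c (tdel X) by rewrite Epush1.
have [b2 [b2z1 cz2]] := real_mor cXz (treal X) cX.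
by exists b2; split; [|split]; rewrite /= ?b2z1 ?cz2 ?Epush1.
Qed.

Lemma trimor_factorsE X Y (a1 : Mor (T1 X) (T1 Y)) (a2 : Mor (T2 X) (T2 Y))
    (a3 : Mor (T3 X) (T3 Y)) :
  is_trimor a1 a2 a3 ->
  factors_through_left a3 (tf2 Y) <-> factors_through_right a1 (tf1 X).
Proof.
move=> [_ [_ a_d]]; split.
- move=> [h eh]; apply: (Epush_eq0_factors (treal X)).
  by rewrite a_d eh EpullM (Epull_deflation (treal Y)) Epull0.
- move=> [v ev]; apply: (Epull_eq0_factors (treal Y)).
  by rewrite -a_d ev EpushM (Epush_inflation (treal X)) Epush0.
Qed.

Lemma quot_mono_section X Y (phi1 : Mor (T1 X) (T1 Y)) (phi2 : Mor (T2 X) (T2 Y))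
    (phi3 : Mor (T3 X) (T3 Y)) :
  is_trimor phi1 phi2 phi3 -> quot_mono phi1 phi2 phi3 -> is_section (colmap (tf1 X) phi1).
Proof.
move=> phi phi_mono.
have [M [d [e de]]] := real_ex (Epush phi1 (tdel X)).
have [W [z1 [z2 eXz]]] := real_ex (Epull e (tdel X)).
have [b2 beta] := trimor_Epull eXz.
have phi_beta_R2 : inR2 (X := Build_Tri eXz) (Y := Y)
    (phi1 ∘ idm (T1 X) - phi1 ∘ 0) (phi2 ∘ b2 - phi2 ∘ 0) (phi3 ∘ e - phi3 ∘ 0).
  rewrite !comp0r !subr0; split; first exact: trimorM.
  apply: (Epull_eq0_factors (treal Y)).
  by case: phi => [_ [_ phi_d]]; rewrite EpullM -phi_d (Epull_deflation de).
have [_ [h eh]] := phi_mono _ _ _ _ _ _ _ beta (trimor0 _ X) phi_beta_R2.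
have e_fac : idm (T3 X) ∘ e = tf2 X ∘ h by rewrite comp1m -eh subr0.
have [a [_]] := et3op de (treal X) e_fac.
by rewrite Epull1 => /(colmap_section_of_Epush (treal X)).
Qed.

Lemma section_quot_mono X Y (phi1 : Mor (T1 X) (T1 Y)) (phi2 : Mor (T2 X) (T2 Y))
    (phi3 : Mor (T3 X) (T3 Y)) :
  is_section (colmap (tf1 X) phi1) -> quot_mono phi1 phi2 phi3.
Proof.
move=> sec Z b1 b2 b3 c1 c2 c3 b c [phi_bc phi_bc_fac].
have bc := trimorB b c; split=> //; apply/(trimor_factorsE bc).
apply: section_colmap_factors sec _ _.
- by exists (b2 - c2); case: bc.
- by rewrite compBr; apply/(trimor_factorsE phi_bc).
Qed.

End TriangleMorphisms.

End Extriangulated.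

Theorem lemma4p2 (C : ExtriCat) (X Y : Tri C)
  (phi1 : Mor (T1 X) (T1 Y)) (phi2 : Mor (T2 X) (T2 Y)) (phi3 : Mor (T3 X) (T3 Y)) :
  is_trimor phi1 phi2 phi3 ->
  ((quot_zero phi1 phi2 phi3 <-> factors_through_right phi1 (tf1 X)) /\
   (factors_through_right phi1 (tf1 X) <-> factors_through_left phi3 (tf2 Y))) /\
  (quot_mono phi1 phi2 phi3 <-> is_section (colmap (tf1 X) phi1)).
Proof.
move=> phi; have factorsE := trimor_factorsE phi.
split; [split|split].
- rewrite /quot_zero /inR2 !subr0.
  split=> [[_ /factorsE] // | /factorsE fac]; exact: conj phi fac.
- by split=> /factorsE.
- exact: quot_mono_section.
- exact: section_quot_mono.
Qed.
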